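(* Let $G$ be a cycle of cliques with cliques $\{C_1,\dots,C_\ell\}$. If there are two cliques $C_i$ and $C_j$ with $C_{i,i}$ and $C_{j,j}$ non-empty, then $Z_+(G)=|V(G)|-\operatorname{cc}(G)$.
   Context: $\operatorname{cc}(G)$ is the minimum number of cliques needed to cover all edges of $G$. A min-max clique covering is a clique covering of size $\operatorname{cc}(G)$ consisting of maximal cliques. $G$ is a cycle of cliques (with cliques $\{C_1,\dots,C_\ell\}$) if $\{C_1,\dots,C_\ell\}$ is a min-max clique covering of $G$ with $C_i\cap C_{i+1}\neq\emptyset$ for $i=1,\dots,\ell-1$ and $C_1\cap C_\ell\neq\emptyset$, while all other pairwise intersections are empty. $C_{i,i}=C_i\setminus\bigcup_{j\ne i}C_j$. $Z_+(G)$ is the positive zero forcing number: the minimum size of a set $B$ of initially black vertices such that repeated application of the rule ''let $W_1,\dots,W_k$ be the vertex sets of components of $G$ minus the black vertices; a black vertex $u$ whose only white neighbour in the subgraph induced by $W_i\cup(\text{black vertices})$ is $w$ may turn $w$ black'' eventually makes all vertices black. *)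

(* A simple graph is a symmetric irreflexive relation
   e : rel T on a finite vertex type T; V(G) = T. *)
From mathcomp Require Import all_boot.
Set Implicit Arguments. Unset Strict Implicit. Unset Printing Implicit Defensive.

Section Graph.
Variables (T : finType) (e : rel T).

Definition is_clique (K : {set T}) : bool :=
  [forall x in K, forall y in K, (x != y) ==> e x y].

Definition is_max_clique (K : {set T}) : bool :=
  is_clique K && [forall K' : {set T}, (is_clique K' && (K \subset K')) ==> (K' == K)].

Definition clique_covering (P : {set {set T}}) : bool :=
  [forall K in P, is_clique K] &&
  [forall x, forall y, e x y ==> [exists K in P, (x \in K) && (y \in K)]].

(* cc(G): minimum size of a clique covering (for a simple graph a covering
   always exists, e.g. all edges; the default #|{set {set T}}| is never used). *)
Definition cc : nat :=
  \big[minn/#|{set {set T}}|]_(P : {set {set T}} | clique_covering P) #|P|.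

Definition min_max_clique_covering (P : {set {set T}}) : bool :=
  [&& clique_covering P, [forall K in P, is_max_clique K] & #|P| == cc].

Definition cyc_adj (l : nat) (i j : 'I_l) : bool :=
  (j == i.+1 %% l :> nat) || (i == j.+1 %% l :> nat).

Definition cycle_of_cliques (l : nat) (C : 'I_l -> {set T}) : Prop :=
  injective C /\
  min_max_clique_covering [set C i | i : 'I_l] /\
  (forall i j : 'I_l, i != j -> (C i :&: C j != set0) = cyc_adj i j).

(* C_{i,i} = C_i minus the union of all other C_j. *)
Definition private_part (l : nat) (C : 'I_l -> {set T}) (i : 'I_l) : {set T} :=
  C i :\: \bigcup_(j : 'I_l | j != i) C j.

Definition white_rel (B : {set T}) : rel T :=
  fun x y => [&& x \notin B, y \notin B & e x y].

(* black u may force white w: w is the only white neighbour of u inside the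
   component W of G - B containing w (i.e. the only white neighbour of u in
   G[W ∪ B]). *)
Definition pforce (B : {set T}) (u w : T) : bool :=
  [&& u \in B, w \notin B, e u w &
      [forall v, ([&& v \notin B, connect (white_rel B) w v & e u v]) ==> (v == w)]].

(* B eventually turns everything black using at most n forces; since each
   force blackens one new vertex, n = #|T| forces always suffice. *)
Fixpoint pzf_within (n : nat) (B : {set T}) : bool :=
  (B == setT) ||
  (if n is n'.+1 then [exists u, exists w, pforce B u w && pzf_within n' (w |: B)]
   else false).

Definition pzf_set (B : {set T}) : bool := pzf_within #|T| B.

(* Z_+(G): minimum size of a positive zero forcing set (setT always is one). *)
Definition Zplus : nat :=
  \big[minn/#|T|]_(B : {set T} | pzf_set B) #|B|.

End Graph.

From mathcomp Require Import all_boot all_order zify.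
Set Implicit Arguments. Unset Strict Implicit. Unset Printing Implicit Defensive.
Import Order.TTheory.

(* Lower bound: when u forces w, the edge uw lies in a clique K of a minimum
   clique covering, and every other vertex of K is already black (a white one
   would be a second white neighbour of u in the component of w); so distinct
   forces complete distinct cliques and at most cc(G) vertices are ever forced.
   Upper bound: rotate the cycle so that the private vertices lie in C_0 and
   C_J, and whiten one vertex per clique.  The private vertex of C_0 is forced
   first; then the cliques of each of the two arcs from C_0 to C_J are handled
   in order along the arc, the white vertex of a clique being forced by a vertex
   it shares with the previous clique; the private vertex of C_J comes last.
   Only for a cycle of three cliques must the white vertex of the middle clique
   be chosen with care. *)

Section PositiveZeroForcing.
Variables (T : finType) (e : rel T).

Lemma pzf_within_mono n m B : pzf_within e n B -> n <= m -> pzf_within e m B.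
Proof.
elim: n m B => [|n IHn] m B /=.
  by rewrite orbF => /eqP-> _; case: m => [|m] /=; rewrite eqxx.
case/orP=> [/eqP-> _|/existsP[u /existsP[w /andP[uw Bw]]]]; case: m => [|m] //=;
  rewrite ?eqxx // => le_nm; apply/orP; right; apply/existsP; exists u; apply/existsP; exists w.
by rewrite uw (IHn m).
Qed.

Lemma is_cliqueP (K : {set T}) : reflect {in K &, forall a b, a != b -> e a b} (is_clique e K).
Proof.
apply: (iffP forall_inP) => [cl a b aK bK|cl a aK]; first exact/implyP/(forall_inP (cl a aK)).
by apply/forall_inP => b bK; apply/implyP/cl.
Qed.

Lemma max_clique_maximal (K K' : {set T}) :
  is_max_clique e K -> is_clique e K' -> K \subset K' -> K' = K.
Proof. by case/andP=> _ /forallP/(_ K') + clK' sKK'; rewrite clK' sKK' => /eqP. Qed.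

Lemma Zplus_le B : pzf_set e B -> Zplus e <= #|B|.
Proof. exact: (bigmin_le_cond #|T| (fun B : {set T} => #|B|)). Qed.

Lemma Zplus_ge m : m <= #|T| -> (forall B, pzf_set e B -> m <= #|B|) -> m <= Zplus e.
Proof. by move=> le_mT le_mB; apply/(bigmin_geP #|T|). Qed.

Lemma pzf_within_white_card P n B : clique_covering e P -> pzf_within e n B ->
  #|~: B| <= #|[set K in P | ~~ (K \subset B)]|.
Proof.
case/andP=> /forallP P_clique /forallP P_cover.
elim: n B => [|n IHn] B /=; first by rewrite orbF => /eqP->; rewrite setCT cards0.
case/orP=> [/eqP->|/existsP[u /existsP[w /andP[/and4P[uB wB euw /forallP w_only] Bw]]]].
  by rewrite setCT cards0.
have /existsP[K /and3P[KP uK wK]] := implyP (forallP (P_cover u) w) euw.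
have K_clique := implyP (P_clique K) KP.
have KwB : K \subset w |: B.
  apply/subsetP => v vK; rewrite !inE; have [//|vw /=] := eqVneq v w.
  apply/negPn/negP => vB.
  have [uv wv] : u != v /\ w != v by split; [apply: contraNneq vB => <- | rewrite eq_sym].
  have /is_cliqueP adjK := K_clique.
  have wv_white : connect (white_rel e B) w v by apply: connect1; rewrite /white_rel wB vB adjK.
  by move/implyP: (w_only v); rewrite vB wv_white adjK //= => /(_ isT); rewrite (negbTE vw).
have -> : #|~: B| = #|~: (w |: B)|.+1.
  rewrite setCU (cardsD1 w (~: B)) inE wB add1n; congr S.
  by apply: eq_card => x; rewrite !inE andbC.
have KB : K \in [set K0 in P | ~~ (K0 \subset B)].
  by rewrite inE KP; apply/subsetPn; exists w.
rewrite (cardsD1 K) KB ltnS; apply: leq_trans (IHn _ Bw) (subset_leq_card _).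
apply/subsetP => K0; rewrite !inE => /andP[K0P K0wB]; rewrite K0P /=.
apply/andP; split; first by apply: contraNneq K0wB => ->.
by apply: contra K0wB => /subset_trans; apply; apply/subsetP => x; rewrite !inE orbC => ->.
Qed.

Lemma Zplus_ge_covering P : clique_covering e P -> #|T| - #|P| <= Zplus e.
Proof.
move=> Pcov; apply: Zplus_ge => [|B /(pzf_within_white_card Pcov)]; first exact: leq_subr.
have sub : [set K in P | ~~ (K \subset B)] \subset P by apply/subsetP => K; rewrite inE => /andP[].
have := subset_leq_card sub; have := cardsC B; lia.
Qed.

Lemma Zplus_eq_covering P B : clique_covering e P -> pzf_set e B ->
  #|B| = #|T| - #|P| -> Zplus e = #|T| - #|P|.
Proof.
move=> Pcov pzfB cardB; apply/eqP; rewrite eqn_leq Zplus_ge_covering // andbT.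
by rewrite -cardB Zplus_le.
Qed.

Lemma pforce_sole_white_nbr (B : {set T}) u w : u \in B -> w \notin B -> e u w ->
  (forall v, v \notin B -> e u v -> v = w) -> pforce e B u w.
Proof.
move=> uB wB euw sole; rewrite /pforce uB wB euw; apply/forallP => v.
by apply/implyP => /and3P[vB _ euv]; rewrite (sole v vB euv).
Qed.

Hypothesis e_irr : irreflexive e.

Lemma pforce_isolated (B : {set T}) u w : u \in B -> w \notin B -> e u w ->
  (forall v, v \notin B -> ~~ e w v) -> pforce e B u w.
Proof.
move=> uB wB euw iso; rewrite /pforce uB wB euw; apply/forallP => v.
apply/implyP => /and3P[_ /connectP[[|z s] /= + ->] _] //.
by case/andP => /and3P[_ zB ewz]; rewrite (negbTE (iso z zB)) in ewz.
Qed.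

(* The vertices [w k] are forced in increasing order of [r k]: the forcing
   vertex [u] is black by then, and either it has no white neighbour forced
   later or [w k] has none (so its white component is a singleton). *)
Lemma pzf_set_forcing_order (I : finType) (w : I -> T) (r : I -> nat) :
  injective w -> injective r ->
  (forall k, exists u, [/\ forall m, u = w m -> r m < r k, e u (w k) &
     (forall m, r k < r m -> ~~ e u (w m)) \/ (forall m, r k < r m -> ~~ e (w k) (w m))]) ->
  pzf_set e (~: (w @: setT)).
Proof.
move=> w_inj r_inj force.
suff pzfA (A : {set I}) : pzf_within e #|A| (~: (w @: A)).
  apply: pzf_within_mono (pzfA setT) _.
  by rewrite cardsT (leq_card _ w_inj).
elim: {A}_.+1 {-2}A (ltnSn #|A|) => // n IHn A.
have [A0 _|[k0 k0A] leAn] := set_0Vmem A; first by rewrite A0 cards0 imset0 setC0 /= eqxx.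
have [k kA k_min] := arg_minnP r k0A; have {}kA : k \in A by [].
have [u [u_black euw u_or_w]] := force k.
have later m : m \in A -> m != k -> r k < r m.
  by move=> mA mk; rewrite ltn_neqAle k_min // andbT (inj_eq r_inj) eq_sym.
have white v : (v \notin ~: (w @: A)) = (v \in w @: A) by rewrite inE negbK.
rewrite (cardsD1 k) kA /=; apply/orP; right.
apply/existsP; exists u; apply/existsP; exists (w k).
apply/andP; split.
  have ukA : u \in ~: (w @: A).
    by rewrite inE; apply/imsetP => -[m mA um]; have := u_black m um; rewrite ltnNge k_min.
  have wkA : w k \notin ~: (w @: A) by rewrite white imset_f.
  case: u_or_w => [u_sole|wk_iso].
    apply: pforce_sole_white_nbr => // v; rewrite white => /imsetP[m mA ->] euwm.
    by have [->//|mk] := eqVneq m k; rewrite (negbTE (u_sole m (later m mA mk))) in euwm.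
  apply: pforce_isolated => // v; rewrite white => /imsetP[m mA ->].
  by have [->|mk] := eqVneq m k; [rewrite e_irr | apply: wk_iso; apply: later].
have -> : w k |: ~: (w @: A) = ~: (w @: (A :\ k)).
  apply/setP => x; rewrite !inE; have [->|xk] /= := eqVneq x (w k).
    by rewrite mem_imset // !inE eqxx.
  congr negb; apply/imsetP/imsetP => -[m mA xm]; exists m => //.
    by rewrite !inE mA andbT; apply: contraNneq xk => mk; rewrite xm mk.
  by move: mA; rewrite !inE => /andP[].
by apply: IHn; rewrite (cardsD1 k) kA in leAn.
Qed.

End PositiveZeroForcing.

Definition cycle_adjacent (l x y : nat) : Prop :=
  y = x.+1 \/ x = y.+1 \/ (x.+1 = l /\ y = 0) \/ (y.+1 = l /\ x = 0).

(* Cliques are forced in the order 0, 1, ..., J-1, l-1, l-2, ..., J+1, J, as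
   ranked by [arc_rank].  The white vertex of clique [x] is forced by a vertex
   shared with clique [arc_pred x], the neighbour of [x] forced before it (for
   [x = 0], clique 1), and lies only in the cliques [z] with [arc_span x z]. *)
Section Arcs.
Variables l J : nat.
Hypotheses (J_gt0 : 0 < J) (J_lt_l : J < l).

Definition arc_pred x :=
  if x == 0 then 1 else if x <= J then x.-1 else if x.+1 == l then 0 else x.+1.

Definition arc_rank x := if x < J then x else if x == J then l.*2 else l.*2 - x.

Definition arc_span x z : Prop := z = x \/ (0 < x < J /\ z = x.+1) \/ (J < x /\ z.+1 = x).

Lemma arc_predE x : x < l ->
  x = 0 /\ arc_pred x = 1 \/ 0 < x <= J /\ arc_pred x = x.-1 \/
  J < x /\ x.+1 < l /\ arc_pred x = x.+1 \/ J < x /\ x.+1 = l /\ arc_pred x = 0.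
Proof.
rewrite /arc_pred => xl; have [->|x0] /= := eqVneq x 0; first lia.
by have [|] := leqP x J; last have [|] := eqVneq x.+1 l; lia.
Qed.

Lemma arc_rankE x :
  x < J /\ arc_rank x = x \/ x = J /\ arc_rank x = l.*2 \/ J < x /\ arc_rank x = l.*2 - x.
Proof. by rewrite /arc_rank; case: ltngtP; lia. Qed.

Lemma arc_pred_adjacent x : x < l ->
  arc_pred x < l /\ arc_pred x <> x /\ cycle_adjacent l x (arc_pred x).
Proof. move/arc_predE; rewrite /cycle_adjacent; lia. Qed.

Lemma arc_span_adjacent x z : 0 < x < l -> x <> J -> z < l ->
  cycle_adjacent l x z -> z <> arc_pred x -> arc_span x z.
Proof. move=> /andP[x0 xl]; have := arc_predE xl; rewrite /cycle_adjacent /arc_span; lia. Qed.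

Lemma arc_common_adjacent x z : 0 < x < l -> x <> J -> z < l -> z <> J ->
  z = x \/ cycle_adjacent l x z -> z = arc_pred x \/ cycle_adjacent l (arc_pred x) z ->
  z = x \/ z = arc_pred x.
Proof. move=> /andP[x0 xl]; have := arc_predE xl; rewrite /cycle_adjacent; lia. Qed.

Lemma arc_only_own x z : 0 < x < l -> x <> J -> z < l ->
  J = x \/ cycle_adjacent l x J -> J = arc_pred x \/ cycle_adjacent l (arc_pred x) J ->
  z = x \/ cycle_adjacent l x z -> z <> arc_pred x -> z <> J -> z = x.
Proof. move=> /andP[x0 xl]; have := arc_predE xl; rewrite /cycle_adjacent; lia. Qed.

Lemma arc_rank_forcer x m : x < l -> m < l ->
  arc_span m x -> arc_span m (arc_pred x) -> arc_rank m < arc_rank x.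
Proof.
move=> xl ml; have := arc_predE xl; have := arc_rankE x; have := arc_rankE m.
rewrite /arc_span; lia.
Qed.

Lemma arc_span_forcer_later x m z : 0 < x < l -> m < l -> arc_rank x < arc_rank m ->
  z = x \/ z = arc_pred x -> ~ arc_span m z.
Proof.
move=> /andP[x0 xl] ml; have := arc_predE xl; have := arc_rankE x; have := arc_rankE m.
rewrite /arc_span; lia.
Qed.

Lemma arc_span_later x m : x < l -> m < l -> arc_rank x < arc_rank m -> ~ arc_span m x.
Proof. move=> xl ml; have := arc_rankE x; have := arc_rankE m; rewrite /arc_span; lia. Qed.

Lemma arc_span_inj x m : x < l -> m < l -> arc_span m x -> arc_span x m -> x = m.
Proof. rewrite /arc_span; lia. Qed.

Lemma arc_rank_inj x m : x < l -> m < l -> arc_rank x = arc_rank m -> x = m.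
Proof. move=> xl ml; have := arc_rankE x; have := arc_rankE m; lia. Qed.

End Arcs.

Section IndexedCycle.
Variables (T : finType) (e : rel T) (l : nat) (D : nat -> {set T}).

Definition cliques_in (v : T) (S : nat -> Prop) := forall z, z < l -> v \in D z -> S z.

Hypotheses (D_clique : forall x a b, a \in D x -> b \in D x -> a != b -> e a b)
  (D_cover : forall a b, e a b -> exists2 x, x < l & (a \in D x) && (b \in D x))
  (D_antichain : forall x y, x < l -> y < l -> D x \subset D y -> x = y)
  (D_meet : forall x y, x < l -> y < l -> x <> y ->
     D x :&: D y != set0 <-> cycle_adjacent l x y).

Lemma cliques_in_nonadj a b Sa Sb : cliques_in a Sa -> cliques_in b Sb ->
  (forall z, z < l -> Sa z -> Sb z -> False) -> ~~ e a b.
Proof.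
move=> aS bS disj; apply/negP => /D_cover[z zl /andP[az bz]].
exact: disj z zl (aS z zl az) (bS z zl bz).
Qed.

Lemma cliques_in_adjacent v x : x < l -> v \in D x ->
  cliques_in v (fun z => z = x \/ cycle_adjacent l x z).
Proof.
move=> xl vx z zl vz; have [->|xz] := eqVneq z x; [by left | right].
by apply/(D_meet xl zl); [apply/eqP; rewrite eq_sym | apply/set0Pn; exists v; rewrite inE vx].
Qed.

Lemma cliques_in_weaken v (S S' : nat -> Prop) :
  (forall z, z < l -> v \in D z -> S z -> S' z) -> cliques_in v S -> cliques_in v S'.
Proof. by move=> SS' vS z zl vz; apply/SS'/vS. Qed.

Lemma setD_cliques_neq0 x y : x < l -> y < l -> x <> y -> D x :\: D y != set0.
Proof.
by move=> xl yl xy; apply: contra_notN xy; rewrite setD_eq0 => /(D_antichain xl yl).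
Qed.

Variable J : nat.
Hypotheses (J_gt0 : 0 < J) (J_lt_l : J < l).

(* [w] is the white vertex of clique [x] and [u] the vertex forcing it. *)
Definition forcing_pair x w u : Prop :=
  [/\ w \in D x, u \in D x, u \in D (arc_pred l J x), cliques_in w (arc_span J x) &
      0 < x /\ cliques_in u (fun z => z = x \/ z = arc_pred l J x) \/ cliques_in w (eq^~ x)].

Hypothesis e_irr : irreflexive e.

Lemma pzf_set_of_forcing_pairs : (forall x, x < l -> exists w u, forcing_pair x w u) ->
  exists2 B, pzf_set e B & #|B| = #|T| - l.
Proof.
move=> pairs; have [W W_pair] := fin_all_exists (fun x : 'I_l => pairs x (ltn_ord x)).
have W_spec x : W x \in D x /\ cliques_in (W x) (arc_span J x).
  by have [u [Wx _ _ xS _]] := W_pair x.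
have W_inj : injective W.
  move=> a b Wab; have [Wa aS] := W_spec a; have [Wb bS] := W_spec b; apply/val_inj.
  apply: (arc_span_inj J_gt0 J_lt_l (ltn_ord a) (ltn_ord b)).
    by apply: bS (ltn_ord a) _; rewrite -Wab.
  by apply: aS (ltn_ord b) _; rewrite Wab.
exists (~: (W @: setT)); last by rewrite cardsCs setCK card_imset // cardsT card_ord.
apply: (pzf_set_forcing_order e_irr W_inj (r := fun x : 'I_l => arc_rank l J x)).
  by move=> a b /(arc_rank_inj J_gt0 J_lt_l (ltn_ord a) (ltn_ord b)) ab; apply/val_inj.
move=> k; have [u [Wk uk uk' _ uS]] := W_pair k; exists u.
have u_black m : u = W m -> arc_rank l J m < arc_rank l J k.
  have [_ mS] := W_spec m; have [kl _] := arc_pred_adjacent J_gt0 J_lt_l (ltn_ord k).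
  by move=> um; apply: (arc_rank_forcer J_gt0 J_lt_l (ltn_ord k) (ltn_ord m));
    apply: mS; rewrite // -um.
split=> //; first by apply: D_clique uk Wk _; apply/eqP => /u_black; rewrite ltnn.
case: uS => [[k0 uS]|kS']; [left | right] => m km; have [_ mS] := W_spec m.
  apply: cliques_in_nonadj uS mS _ => z zl.
  by apply: (arc_span_forcer_later J_gt0 J_lt_l); rewrite ?k0 ?ltn_ord.
apply: cliques_in_nonadj kS' mS _ => z zl ->.
by apply: (arc_span_later J_gt0 J_lt_l); rewrite ?ltn_ord.
Qed.

Variables p q : T.
Hypotheses (p_in : p \in D 0) (p_only : cliques_in p (eq^~ 0))
  (q_in : q \in D J) (q_only : cliques_in q (eq^~ J)).

Lemma forcing_pair_private x w u : w \in D x -> cliques_in w (eq^~ x) ->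
  u \in D x :&: D (arc_pred l J x) -> forcing_pair x w u.
Proof.
move=> wx w_only; rewrite inE => /andP[ux ux']; split=> //; last by right.
by apply: cliques_in_weaken w_only => z _ _ ->; left.
Qed.

Lemma forcing_pair_exists x : x < l -> exists w u, forcing_pair x w u.
Proof.
move=> xl.
have [x'l [x'x xx']] := arc_pred_adjacent J_gt0 J_lt_l xl.
have /set0Pn[u0 u0xx'] : D x :&: D (arc_pred l J x) != set0 by apply/D_meet => //; apply: nesym.
have [x0|x0] := eqVneq x 0; first by exists p, u0; apply: forcing_pair_private; rewrite // x0.
have [xJ|xJ] := eqVneq x J; first by exists q, u0; apply: forcing_pair_private; rewrite // xJ.
move/eqP: xJ => xJ; have x_gt0 : 0 < x by rewrite lt0n.
have x_arc : 0 < x < l by rewrite x_gt0.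
have [/existsP[u /andP[uxx' uJ]]|] :=
  boolP [exists u, (u \in D x :&: D (arc_pred l J x)) && (u \notin D J)].
  have /set0Pn[w] := setD_cliques_neq0 xl x'l (nesym x'x); rewrite inE => /andP[wx' wx].
  move: uxx'; rewrite inE => /andP[ux ux'].
  exists w, u; split=> //.
    apply: cliques_in_weaken (cliques_in_adjacent xl wx) => z zl wz [->|xz]; first by left.
    by apply: (arc_span_adjacent J_gt0 J_lt_l) => // zx'; rewrite -zx' wz in wx'.
  left; split=> // z zl uz; apply: (arc_common_adjacent J_gt0 J_lt_l) => //.
  - by apply/eqP; apply: contraNneq uJ => <-.
  - exact: cliques_in_adjacent xl ux z zl uz.
  - exact: cliques_in_adjacent x'l ux' z zl uz.
(* Only for l = 3 can all of D x :&: D (arc_pred x) lie in D J; then a vertex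
   of D x outside D J lies in no other clique. *)
move/existsPn => meet_in_J; have u0J : u0 \in D J by move: (meet_in_J u0); rewrite u0xx' negbK.
have /set0Pn[w] := setD_cliques_neq0 xl J_lt_l xJ; rewrite inE => /andP[wJ wx].
exists w, u0; apply: forcing_pair_private => // z zl wz.
move: u0xx'; rewrite inE => /andP[u0x u0x'].
apply: (arc_only_own J_gt0 J_lt_l x_arc xJ zl).
- exact: cliques_in_adjacent xl u0x J J_lt_l u0J.
- exact: cliques_in_adjacent x'l u0x' J J_lt_l u0J.
- exact: cliques_in_adjacent xl wx z zl wz.
- by move=> zx'; move: (meet_in_J w); rewrite inE wx -zx' wz wJ.
- by move=> zJ; rewrite -zJ wz in wJ.
Qed.

Lemma indexed_cycle_pzf_set : exists2 B, pzf_set e B & #|B| = #|T| - l.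
Proof. exact: pzf_set_of_forcing_pairs forcing_pair_exists. Qed.

End IndexedCycle.

Section Rotation.
Variables (l : nat) (i : 'I_l).

Fact rotate_subproof x : (i + x) %% l < l.
Proof. by rewrite ltn_pmod // (leq_ltn_trans _ (ltn_ord i)). Qed.

Definition rotate x : 'I_l := Ordinal (rotate_subproof x).

Lemma rotate0 : rotate 0 = i.
Proof. by apply/val_inj; rewrite /= addn0 modn_small. Qed.

Lemma rotate_inj x y : x < l -> y < l -> rotate x = rotate y -> x = y.
Proof. by move=> xl yl /(congr1 val) /eqP; rewrite /= eqn_modDl !modn_small // => /eqP. Qed.

Lemma rotate_surj k : exists2 x, x < l & rotate x = k.
Proof.
exists ((k + (l - i)) %% l); first by rewrite ltn_pmod // (leq_ltn_trans _ (ltn_ord i)).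
apply/val_inj; rewrite /= modnDmr addnCA subnKC ?(ltnW (ltn_ord i)) //.
by rewrite modnDr modn_small.
Qed.

Lemma cyc_adj_rotate x y : x < l -> y < l ->
  cyc_adj (rotate x) (rotate y) <-> cycle_adjacent l x y.
Proof.
have succ_rotate a b : b < l -> ((i + b) %% l == ((i + a) %% l).+1 %% l) = (b == a.+1 %% l).
  by move=> bl; rewrite -addn1 modnDml addn1 -addnS eqn_modDl (modn_small bl).
have succ_mod a : a < l -> a.+1 %% l = if a.+1 == l then 0 else a.+1.
  by move=> al; case: eqP => [->|ne]; [rewrite modnn | rewrite modn_small //; lia].
move=> xl yl; rewrite /cyc_adj /= !succ_rotate // !succ_mod // /cycle_adjacent.
by case: (x.+1 =P l) => ?; case: (y.+1 =P l) => ?; split => [/orP[]/eqP|]; lia.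
Qed.

End Rotation.

Lemma cycle_of_cliques_pzf_set (T : finType) (e : rel T) (e_irr : irreflexive e)
    (l : nat) (C : 'I_l -> {set T}) :
  cycle_of_cliques e C ->
  (exists i j : 'I_l, [/\ i != j, private_part C i != set0 & private_part C j != set0]) ->
  exists2 B, pzf_set e B & #|B| = #|T| - l.
Proof.
case=> C_inj [/and3P[/andP[/forall_inP C_clique /forallP C_cover] /forall_inP C_max _] C_meet].
case=> i [j [ij /set0Pn[p p_priv] /set0Pn[q q_priv]]].
have C_in k : C k \in [set C k | k : 'I_l] by apply: imset_f.
pose D x := C (rotate i x); have [J J_lt_l rotJ] := rotate_surj i j.
have J_gt0 : 0 < J by rewrite lt0n; apply: contraNneq ij => J0; rewrite -rotJ J0 rotate0.
have private_only k x v : x < l -> rotate i x = k -> v \in private_part C k ->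
    v \in D x /\ cliques_in l D v (eq^~ x).
  move=> xl <- /setDP[vx v_out]; split=> // z zl vz; apply: (rotate_inj (i := i)) => //.
  by apply/eqP; apply: contraNT v_out => zx; apply/bigcupP; exists (rotate i z).
have [p_in p_only] := private_only _ _ _ (ltn_trans J_gt0 J_lt_l) (rotate0 i) p_priv.
have [q_in q_only] := private_only _ _ _ J_lt_l rotJ q_priv.
apply: (indexed_cycle_pzf_set _ _ _ _ J_gt0 J_lt_l e_irr p_in p_only q_in q_only).
- by move=> x a b; move/is_cliqueP: (C_clique _ (C_in (rotate i x))); apply.
- move=> a b /(implyP (forallP (C_cover a) b))/exists_inP[_ /imsetP[k _ ->] /andP[ak bk]].
  by have [x xl rotx] := rotate_surj i k; exists x; rewrite // /D rotx ak.
- move=> x y xl yl Dxy; apply: (rotate_inj (i := i)) => //; apply: C_inj.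
  exact/esym/(max_clique_maximal (C_max _ (C_in _)) (C_clique _ (C_in _)) Dxy).
- move=> x y xl yl xy; rewrite -(cyc_adj_rotate i) // -C_meet //.
  by apply/eqP => /(rotate_inj xl yl).
Qed.

Theorem mainTheorem9 (T : finType) (e : rel T)
    (e_sym : symmetric e) (e_irr : irreflexive e)
    (l : nat) (C : 'I_l -> {set T}) :
  cycle_of_cliques e C ->
  (exists i j : 'I_l, [/\ i != j, private_part C i != set0 & private_part C j != set0]) ->
  Zplus e = #|T| - cc e.
Proof.
move=> cyc privs; have [C_inj [/and3P[cover _ /eqP <-] _]] := cyc.
have card_l : #|[set C k | k : 'I_l]| = l by rewrite card_imset ?card_ord.
have [B pzfB cardB] := cycle_of_cliques_pzf_set e_irr cyc privs.
by apply: (Zplus_eq_covering cover pzfB); rewrite card_l.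
Qed.
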